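(* Let $X=\{x_0,\ldots,x_m\}$, $\tilde X=\{\tilde x_1,\ldots,\tilde x_\ell\}$ (commuting), $d,d'\in\mathbb{R}^k[[\tilde X]]$ and let $c\in\mathbb{R}^\ell\langle\langle X\rangle\rangle$ be proper. Then $(d\cdot d')\circ c=(d\circ c)\sqcup\!\sqcup(d'\circ c)$, provided $d\circ c$ and $d'\circ c$ are well-defined, where $\circ$ denotes the Wiener-Fliess composition product and $d\cdot d'$ the Cauchy product.
   Context: $\mathbb{R}^\ell\langle\langle X\rangle\rangle$: formal power series in noncommuting letters of $X$ with coefficients in $\mathbb{R}^\ell$; $c$ is proper if $(c,\emptyset)=0$; $c_i$ is the $i$-th component. $\mathbb{R}^k[[\tilde X]]$: formal power series in commuting letters $\tilde x_1,\ldots,\tilde x_\ell$ with coefficients in $\mathbb{R}^k$. Shuffle product $\sqcup\!\sqcup$: bilinear, $(x_i\eta)\sqcup\!\sqcup(x_j\xi)=x_i(\eta\sqcup\!\sqcup x_j\xi)+x_j(x_i\eta\sqcup\!\sqcup\xi)$, $\eta\sqcup\!\sqcup\emptyset=\emptyset\sqcup\!\sqcup\eta=\eta$; on vector-valued series componentwise. Cauchy product: $(d\cdot d',\eta)=\sum_{\zeta\nu=\eta}(d,\zeta)(d',\nu)$ with componentwise products in $\mathbb{R}^k$. The Wiener-Fliess composition product of $d\in\mathbb{R}^k[[\tilde X]]$ and proper $c\in\mathbb{R}^\ell\langle\langle X\rangle\rangle$ is $d\circ c=\sum_{\tilde\eta\in\tilde X^\ast}(d,\tilde\eta)\,c^{\sqcup\!\sqcup\tilde\eta}\in\mathbb{R}^k\langle\langle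 X\rangle\rangle$, where $c^{\sqcup\!\sqcup\emptyset}=1$ and $c^{\sqcup\!\sqcup\tilde x_i\tilde\eta}=c_i\sqcup\!\sqcup c^{\sqcup\!\sqcup\tilde\eta}$; it is the generating series of $f_d\circ F_c$. *)

From HB Require Import structures.
From mathcomp Require Import all_boot all_order all_algebra.
From mathcomp Require Import reals.
Set Implicit Arguments. Unset Strict Implicit. Unset Printing Implicit Defensive.
Import Order.TTheory GRing.Theory Num.Theory.
Local Open Scope ring_scope.

(* Words over the (noncommuting) alphabet X = {x_0, ..., x_m}: letter x_i is i : 'I_m.+1. *)
Definition word (m : nat) := seq 'I_m.+1.

Definition sseries (R : Type) (m : nat) := word m -> R.
Definition ncseries (R : Type) (m n : nat) := word m -> 'I_n -> R.

Definition proper_series (R : realType) (m n : nat) (c : ncseries R m n) : Prop :=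
  forall i : 'I_n, c [::] i = 0.

(* Shuffle of two words, as the list (with multiplicity) of words it sums:
   (x_i eta) sh (x_j xi) = x_i (eta sh x_j xi) + x_j (x_i eta sh xi),
   eta sh [::] = [::] sh eta = eta. *)
Fixpoint shw (m : nat) (u v : word m) {struct u} : seq (word m) :=
  match u with
  | [::] => [:: v]
  | x :: u' =>
    let fix shv (v : word m) : seq (word m) :=
      match v with
      | [::] => [:: u]
      | y :: v' => map (cons x) (shw u' v) ++ map (cons y) (shv v')
      end
    in shv v
  end.

(* Bilinear extension of the shuffle to scalar series: the coefficient of w
   in a sh b is sum_{u,v} (a,u)(b,v) (u sh v, w); only |u| + |v| = |w|
   can contribute, so the sum is finite. *)
Definition shuffle (R : realType) (m : nat) (a b : sseries R m) : sseries R m :=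
  fun w => \sum_(i < (size w).+1)
             \sum_(u : i.-tuple 'I_m.+1) \sum_(v : (size w - i).-tuple 'I_m.+1)
               a u * b v * (count_mem w (shw u v))%:R.

Definition shuffle_vec (R : realType) (m k : nat) (a b : ncseries R m k) : ncseries R m k :=
  fun w j => shuffle (fun u => a u j) (fun u => b u j) w.

Definition sone (R : realType) (m : nat) : sseries R m :=
  fun w => if w is [::] then 1 else 0.

Definition shpow (R : realType) (m : nat) (a : sseries R m) (n : nat) : sseries R m :=
  iter n (shuffle a) (@sone R m).

(* Commutative words over Xt = {xt_1, ..., xt_ell} are monomials,
   i.e. exponent vectors (letter xt_(i+1) has index i : 'I_ell). *)
Definition monomial (ell : nat) := {ffun 'I_ell -> nat}.

Definition cseries (R : Type) (ell k : nat) := monomial ell -> 'I_k -> R.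

(* c^{sh eta} for eta = xt^alpha : c_1^{sh alpha_1} sh ... sh c_ell^{sh alpha_ell}
   (order irrelevant since the shuffle is commutative and associative);
   c^{sh empty} = 1. *)
Definition shmon (R : realType) (m ell : nat) (c : ncseries R m ell) (alpha : monomial ell)
  : sseries R m :=
  \big[@shuffle R m / @sone R m]_(i < ell) shpow (fun w => c w i) (alpha i).

(* Cauchy product: (d . d', gamma) = sum_{alpha + beta = gamma} (d,alpha)(d',beta),
   componentwise in R^k.  alpha ranges over exponent vectors below gamma. *)
Definition cauchy (R : realType) (ell k : nat) (d d' : cseries R ell k) : cseries R ell k :=
  fun gamma j =>
    \sum_(a : {ffun 'I_ell -> 'I_(\max_(i < ell) gamma i).+1} | [forall i, (a i <= gamma i)%N])
      d [ffun i => nat_of_ord (a i)] j * d' [ffun i => (gamma i - a i)%N] j.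

(* Wiener-Fliess composition d o c = sum_eta (d,eta) c^{sh eta}.  For proper c,
   (c^{sh alpha}, w) = 0 as soon as |alpha| > |w|, so the sum is finite and it is
   exactly the sum over exponent vectors with every exponent <= |w|. *)
Definition wf_comp (R : realType) (m ell k : nat) (d : cseries R ell k) (c : ncseries R m ell)
  : ncseries R m k :=
  fun w j =>
    \sum_(a : {ffun 'I_ell -> 'I_(size w).+1})
      d [ffun i => nat_of_ord (a i)] j * shmon c [ffun i => nat_of_ord (a i)] w.

(* Both sides are finite sums over pairs of exponent vectors (alpha, beta) of
   (d, alpha) (d', beta) times, respectively, c^{sh (alpha + beta)} and
   c^{sh alpha} sh c^{sh beta}; these agree because the shuffle is associative
   and commutative.  The shuffle algebra is derived from the recursion
   (a sh b, x w) = (x^-1 a sh b, w) + (a sh x^-1 b, w), and truncating every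
   exponent at |w| is harmless because, c being proper, c^{sh alpha} vanishes on
   words shorter than |alpha|. *)
From HB Require Import structures.
From mathcomp Require Import all_boot all_order all_algebra.
From mathcomp Require Import reals boolp zify.
Set Implicit Arguments. Unset Strict Implicit. Unset Printing Implicit Defensive.
Import Order.TTheory GRing.Theory Num.Theory.
Local Open Scope ring_scope.

Section ShuffleAlgebra.
Variables (R : realType) (m : nat).
Implicit Types (a b c : sseries R m) (u v w : word m) (x : 'I_m.+1).

Fixpoint words (n : nat) : seq (word m) :=
  if n is n'.+1 then [seq x :: u | x <- enum 'I_m.+1, u <- words n'] else [:: [::]].

Lemma sum_tuple_words (V : nmodType) n (F : word m -> V) :
  \sum_(u : n.-tuple 'I_m.+1) F u = \sum_(u <- words n) F u.
Proof.
elim: n F => [|n IHn] F.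
  rewrite (big_pred1 [tuple]) ?big_seq1 // => t.
  by apply/esym/eqP/val_inj; case: t => [[]].
rewrite /= big_allpairs_dep /=.
rewrite (reindex (fun p : 'I_m.+1 * n.-tuple 'I_m.+1 => [tuple of p.1 :: p.2])) /=.
  rewrite -(pair_big predT predT (fun x (t : n.-tuple 'I_m.+1) => F (x :: t))) /=.
  by rewrite big_enum; apply: eq_bigr => x _; apply: IHn.
exists (fun t : n.+1.-tuple 'I_m.+1 => (thead t, [tuple of behead t])).
  by case=> x t _ /=; congr (_, _); apply: val_inj.
by move=> t _; rewrite /= [in RHS](tuple_eta t).
Qed.

Let shcoef w u v : R := (count_mem w (shw u v))%:R.

Lemma shuffle_words a b w : shuffle a b w =
  \sum_(i < (size w).+1) \sum_(u <- words i) \sum_(v <- words (size w - i))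
    a u * b v * shcoef w u v.
Proof.
apply: eq_bigr => i _.
rewrite (sum_tuple_words _ (fun u =>
  \sum_(v : (size w - i).-tuple 'I_m.+1) a u * b v * shcoef w u v)).
by apply: eq_bigr => u _; rewrite (sum_tuple_words _ (fun v => a u * b v * shcoef w u v)).
Qed.

Lemma count_shw_cons x w u v : count_mem (x :: w) (shw u v) =
  ((if u is y :: u' then (y == x) * count_mem w (shw u' v) else 0) +
   (if v is z :: v' then (z == x) * count_mem w (shw u v') else 0))%N.
Proof.
have count_cons y (s : seq (word m)) :
    count_mem (x :: w) (map (cons y) s) = ((y == x) * count_mem w s)%N.
  elim: s => [|u' s IHs] /=; first by rewrite muln0.
  by rewrite IHs mulnDr eqseq_cons; case: (y == x); case: (u' == w).
case: u => [|y u']; case: v => [|z v'] //=.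
- by rewrite eqseq_cons !addn0 add0n; case: (z == x); case: (v' == w).
- have -> : shw u' [::] = [:: u'] by case: u'.
  by rewrite /= eqseq_cons; case: (y == x); case: (u' == w).
- by rewrite count_cat !count_cons.
Qed.

Definition lshift x a : sseries R m := fun u => a (x :: u).

Lemma shuffle_nil a b : shuffle a b [::] = a [::] * b [::].
Proof. by rewrite shuffle_words /= big_ord1 /= !big_seq1 /shcoef /= mulr1. Qed.

Lemma shuffle_cons a b x w :
  shuffle a b (x :: w) = shuffle (lshift x a) b w + shuffle a (lshift x b) w.
Proof.
rewrite !shuffle_words /=; set n := size w.
pose cl u v : R := if u is y :: u' then (y == x)%:R * shcoef w u' v else 0.
pose cr u v : R := if v is z :: v' then (z == x)%:R * shcoef w u v' else 0.
have shcoef_cons u v : shcoef (x :: w) u v = cl u v + cr u v.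
  rewrite /shcoef count_shw_cons natrD.
  by case: u => [|y u']; case: v => [|z v'] //=; rewrite ?natrM ?add0r ?addr0.
transitivity (
  (\sum_(i < n.+2) \sum_(u <- words i) \sum_(v <- words (n.+1 - i)) a u * b v * cl u v) +
  \sum_(i < n.+2) \sum_(u <- words i) \sum_(v <- words (n.+1 - i)) a u * b v * cr u v).
  rewrite -big_split; apply: eq_bigr => i _; rewrite -big_split.
  apply: eq_bigr => u _; rewrite -big_split; apply: eq_bigr => v _.
  by rewrite shcoef_cons mulrDr.
have sum_at_x (F : 'I_m.+1 -> R) :
    (forall y, y != x -> F y = 0) -> \sum_(y <- enum 'I_m.+1) F y = F x.
  by move=> F0; rewrite big_enum /= (bigD1 x) //= big1 ?addr0.
congr (_ + _).
  rewrite big_ord_recl /= big_seq1 big1 ?add0r; last by move=> v _; rewrite mulr0.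
  apply: eq_bigr => i _ /=; rewrite add0n subSS big_allpairs_dep /=.
  rewrite sum_at_x => [|y /negbTE yx].
    by apply: eq_bigr => u _; apply: eq_bigr => v _; rewrite eqxx mul1r.
  by apply: big1 => u _; apply: big1 => v _; rewrite yx mul0r mulr0.
rewrite big_ord_recr /= subnn [X in _ + X]big1 ?addr0; last first.
  by move=> u _; rewrite /= big_seq1 mulr0.
apply: eq_bigr => i _ /=; apply: eq_bigr => u _.
rewrite subSn ?(ltnSE (ltn_ord i)) //= big_allpairs_dep /=.
rewrite sum_at_x => [|y /negbTE yx].
  by apply: eq_bigr => v _; rewrite eqxx mul1r.
by apply: big1 => v _; rewrite yx mul0r mulr0.
Qed.

Lemma eq_shuffle a a' b b' w :
  (forall u, (size u <= size w)%N -> a u = a' u) ->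
  (forall v, (size v <= size w)%N -> b v = b' v) ->
  shuffle a b w = shuffle a' b' w.
Proof.
move=> eq_a eq_b; apply: eq_bigr => i _; apply: eq_bigr => u _.
apply: eq_bigr => v _; rewrite eq_a ?eq_b // size_tuple ?leq_subr //.
by rewrite -ltnS.
Qed.

Lemma shuffleC a b w : shuffle a b w = shuffle b a w.
Proof.
elim: w a b => [|x w IHw] a b; first by rewrite !shuffle_nil mulrC.
by rewrite !shuffle_cons IHw (IHw a) addrC.
Qed.

Lemma shuffle0r a w : shuffle a (fun=> 0) w = 0.
Proof.
elim: w a => [|x w IHw] a; first by rewrite shuffle_nil mulr0.
by rewrite shuffle_cons IHw (IHw a) addr0.
Qed.

Lemma shuffler1 a w : shuffle a (@sone R m) w = a w.
Proof.
elim: w a => [|x w IHw] a; first by rewrite shuffle_nil mulr1.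
by rewrite shuffle_cons IHw shuffle0r addr0.
Qed.

Lemma shuffleDl a a' b w :
  shuffle (fun u => a u + a' u) b w = shuffle a b w + shuffle a' b w.
Proof.
elim: w a a' b => [|x w IHw] a a' b; first by rewrite !shuffle_nil mulrDl.
by rewrite !shuffle_cons (IHw (lshift x a) (lshift x a')) IHw addrACA.
Qed.

Lemma shuffleDr a b b' w :
  shuffle a (fun u => b u + b' u) w = shuffle a b w + shuffle a b' w.
Proof. by rewrite shuffleC shuffleDl !(shuffleC a). Qed.

Lemma shuffle_suml (I : finType) (s : I -> R) (F : I -> sseries R m) b w :
  shuffle (fun u => \sum_i s i * F i u) b w = \sum_i s i * shuffle (F i) b w.
Proof.
elim: w F b => [|x w IHw] F b.
  by rewrite shuffle_nil mulr_suml; apply: eq_bigr => i _; rewrite shuffle_nil mulrA.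
rewrite shuffle_cons (IHw (fun i => lshift x (F i))) IHw -big_split.
by apply: eq_bigr => i _; rewrite shuffle_cons mulrDr.
Qed.

Lemma shuffle_sumr (I : finType) (s : I -> R) (F : I -> sseries R m) a w :
  shuffle a (fun u => \sum_i s i * F i u) w = \sum_i s i * shuffle a (F i) w.
Proof.
by rewrite shuffleC shuffle_suml; apply: eq_bigr => i _; rewrite shuffleC.
Qed.

Lemma shuffleA a b c w : shuffle (shuffle a b) c w = shuffle a (shuffle b c) w.
Proof.
elim: w a b c => [|x w IHw] a b c; first by rewrite !shuffle_nil mulrA.
have lshift_shuffle a1 b1 : lshift x (shuffle a1 b1) =
    (fun u => shuffle (lshift x a1) b1 u + shuffle a1 (lshift x b1) u).
  by apply: funext => u; rewrite /lshift shuffle_cons.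
by rewrite !shuffle_cons !lshift_shuffle shuffleDl shuffleDr !IHw addrA.
Qed.

HB.instance Definition _ := Monoid.isComLaw.Build (sseries R m) (@sone R m) (@shuffle R m)
  (fun a b c => esym (funext (shuffleA a b c))) (fun a b => funext (shuffleC a b))
  (fun a => funext (fun w => etrans (shuffleC _ a w) (shuffler1 a w))).

Definition ord_ge a p := forall u, (size u < p)%N -> a u = 0.

Lemma ord_ge_shuffle a b p q : ord_ge a p -> ord_ge b q -> ord_ge (shuffle a b) (p + q).
Proof.
move=> a_p b_q u; elim: u a b p q a_p b_q => [|x w IHw] a b p q a_p b_q /= w_lt.
  by rewrite shuffle_nil; case: p a_p w_lt => [|p] a_p w_lt;
    [rewrite (b_q [::]) ?mulr0 | rewrite (a_p [::]) ?mul0r].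
rewrite shuffle_cons (IHw _ b p.-1 q) ?(IHw a _ p q.-1) ?addr0 //; try lia.
- by move=> u u_lt; apply: b_q => /=; lia.
- by move=> u u_lt; apply: a_p => /=; lia.
Qed.

Lemma ord_ge_shpow a n : ord_ge a 1 -> ord_ge (shpow a n) n.
Proof.
move=> ord_a; elim: n => [|n IHn]; first by [].
by rewrite -add1n; apply: ord_ge_shuffle.
Qed.

Variables (ell : nat) (c : ncseries R m ell).
Implicit Types (al be : monomial ell).

Lemma shmon_eq0 al w i :
  proper_series c -> (size w < al i)%N -> shmon c al w = 0.
Proof.
move=> c_proper w_lt.
have: ord_ge (shmon c al) (\sum_(i < ell) al i).
  apply: (big_rec2 (fun s n => ord_ge s n)) => // i' s n _ s_n.
  by apply: ord_ge_shuffle => //; apply: ord_ge_shpow => -[].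
by apply; apply: leq_trans w_lt _; rewrite (bigD1 i) //= leq_addr.
Qed.

Lemma shpowD a n1 n2 : shpow a (n1 + n2) = shuffle (shpow a n1) (shpow a n2).
Proof.
elim: n1 => [|n IHn]; first by rewrite add0n Monoid.mul1m.
by rewrite addSn /= IHn Monoid.mulmA.
Qed.

Lemma shmonD al be :
  shmon c [ffun i => (al i + be i)%N] = shuffle (shmon c al) (shmon c be).
Proof. by rewrite /shmon -big_split; apply: eq_bigr => i _; rewrite ffunE shpowD. Qed.

End ShuffleAlgebra.

Section BoundedExponents.
Variables (V : nmodType) (ell : nat).

Definition mon_of K (a : {ffun 'I_ell -> 'I_K}) : monomial ell := [ffun i => nat_of_ord (a i)].

Lemma mon_ofE K (a : {ffun 'I_ell -> 'I_K}) i : mon_of a i = a i.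
Proof. by rewrite ffunE. Qed.

Lemma sum_mon_widen N M (P : pred (monomial ell)) (G : monomial ell -> V) :
  (N <= M)%N -> (forall al, P al -> (exists i, N < al i)%N -> G al = 0) ->
  \sum_(a : {ffun 'I_ell -> 'I_M.+1} | P (mon_of a)) G (mon_of a) =
  \sum_(b : {ffun 'I_ell -> 'I_N.+1} | P (mon_of b)) G (mon_of b).
Proof.
move=> le_NM G0.
have lt_M (b : {ffun 'I_ell -> 'I_N.+1}) i : (b i < M.+1)%N.
  by rewrite ltnS (leq_trans (leq_ord _) le_NM).
pose widen (b : {ffun 'I_ell -> 'I_N.+1}) : {ffun 'I_ell -> 'I_M.+1} := [ffun i => inord (b i)].
pose narrow (a : {ffun 'I_ell -> 'I_M.+1}) : {ffun 'I_ell -> 'I_N.+1} := [ffun i => inord (a i)].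
have mon_of_widen b : mon_of (widen b) = mon_of b.
  by apply/ffunP => i; rewrite !ffunE inordK.
rewrite (bigID (fun a : {ffun 'I_ell -> 'I_M.+1} => [forall i, a i <= N]%N)) /=.
rewrite [X in _ + X]big1 ?addr0; last first.
  move=> a /andP[Pa /forallPn[i]]; rewrite -ltnNge => lt_Na.
  by apply: G0 => //; exists i; rewrite mon_ofE.
rewrite (reindex_onto widen narrow) /=; last first.
  move=> a /andP[_ /forallP a_le]; apply/ffunP => i; apply: val_inj.
  by rewrite !ffunE /= inordK ?inordK // ltnS ?a_le // (leq_trans (a_le i)).
apply: eq_big => [b|b _]; last by rewrite mon_of_widen.
rewrite mon_of_widen -andbA; case: (P _) => //=; apply/andP; split.
  by apply/forallP => i; rewrite ffunE inordK // leq_ord.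
by apply/eqP/ffunP => i; apply: val_inj; rewrite !ffunE /= inordK // inordK.
Qed.

Lemma sum_mon_shift N (a : {ffun 'I_ell -> 'I_N.+1})
    (G : monomial ell -> monomial ell -> V) :
  (forall (be ga : monomial ell) i, (N < ga i)%N -> G be ga = 0) ->
  \sum_(g : {ffun 'I_ell -> 'I_N.+1} | [forall i, mon_of a i <= mon_of g i]%N)
     G [ffun i => (mon_of g i - mon_of a i)%N] (mon_of g) =
  \sum_(b : {ffun 'I_ell -> 'I_N.+1}) G (mon_of b) [ffun i => (mon_of a i + mon_of b i)%N].
Proof.
move=> G0.
pose shift (b : {ffun 'I_ell -> 'I_N.+1}) : {ffun 'I_ell -> 'I_N.+1} :=
  [ffun i => inord (a i + b i)].
pose unshift (g : {ffun 'I_ell -> 'I_N.+1}) : {ffun 'I_ell -> 'I_N.+1} :=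
  [ffun i => inord (g i - a i)].
rewrite (reindex_onto shift unshift) /=; last first.
  move=> g /forallP a_le; apply/ffunP => i; apply: val_inj; have := a_le i.
  rewrite !ffunE /= => a_le_i.
  have sub_lt : (g i - a i < N.+1)%N by rewrite ltnS (leq_trans (leq_subr _ _) (leq_ord _)).
  by rewrite (inordK sub_lt) subnKC // inordK.
rewrite [RHS](bigID (fun b : {ffun 'I_ell -> 'I_N.+1} => [forall i, a i + b i <= N]%N)) /=.
rewrite [X in _ = _ + X]big1 ?addr0; last first.
  by move=> b /forallPn[i]; rewrite -ltnNge => lt_N; apply: (G0 _ _ i); rewrite !ffunE.
have shift_in (b : {ffun 'I_ell -> 'I_N.+1}) : [forall i, a i + b i <= N]%N ->
    mon_of (shift b) = [ffun i => (mon_of a i + mon_of b i)%N].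
  by move=> /forallP ab_le; apply/ffunP => i; rewrite !ffunE inordK // ltnS ab_le.
have shift_inP (b : {ffun 'I_ell -> 'I_N.+1}) : ([forall i, mon_of a i <= mon_of (shift b) i]%N
    && (unshift (shift b) == b)) = [forall i, a i + b i <= N]%N.
  apply/andP/idP => [[/forallP a_le /eqP shiftK]|ab_le]; last first.
    rewrite shift_in //; split; first by apply/forallP => i; rewrite !ffunE leq_addr.
    apply/eqP/ffunP => i; apply: val_inj; move/forallP: ab_le => ab_le.
    by rewrite !ffunE /= (inordK (_ : a i + b i < N.+1)%N) ?ltnS ?ab_le // addKn inordK.
  apply/forallP => i; have := congr1 (fun f : {ffun 'I_ell -> 'I_N.+1} => val (f i)) shiftK.
  have := a_le i; rewrite !ffunE /=; set v : 'I_N.+1 := inord _ => a_le_v.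
  rewrite inordK => [<-|]; first by rewrite subnKC // leq_ord.
  by rewrite ltnS (leq_trans (leq_subr _ _) (leq_ord v)).
apply: eq_big => [b|b]; first exact: shift_inP.
rewrite shift_inP => /shift_in ->.
by congr G; apply/ffunP => i; rewrite !ffunE addKn.
Qed.

End BoundedExponents.

Section Composition.
Variables (R : realType) (m ell k : nat) (j : 'I_k).

Lemma cauchy_mon_of (d d' : cseries R ell k) N (g : {ffun 'I_ell -> 'I_N.+1}) :
  cauchy d d' (mon_of g) j =
  \sum_(a : {ffun 'I_ell -> 'I_N.+1} | [forall i, mon_of a i <= mon_of g i]%N)
    d (mon_of a) j * d' [ffun i => (mon_of g i - mon_of a i)%N] j.
Proof.
pose P (al : monomial ell) := [forall i, al i <= mon_of g i]%N.
pose G (al : monomial ell) := d al j * d' [ffun i => (mon_of g i - al i)%N] j.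
transitivity (\sum_(a : {ffun 'I_ell -> 'I_(\max_(i < ell) mon_of g i).+1} | P (mon_of a))
               G (mon_of a)).
  apply: eq_big => [a|a _]; first by rewrite /P; apply: eq_forallb => i; rewrite !mon_ofE.
  by rewrite /G /=; congr (_ * d' _ j); apply/ffunP => i; rewrite !ffunE.
symmetry; apply: sum_mon_widen.
  by apply/bigmax_leqP => i _; rewrite ffunE leq_ord.
move=> al /forallP al_le [i]; apply: contraTeq => _.
by rewrite -leqNgt (leq_trans (al_le i)) ?(leq_bigmax_cond (F := mon_of g)).
Qed.

Lemma wf_compE (e : cseries R ell k) (c : ncseries R m ell) N u :
  proper_series c -> (size u <= N)%N ->
  wf_comp e c u j = \sum_(a : {ffun 'I_ell -> 'I_N.+1}) e (mon_of a) j * shmon c (mon_of a) u.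
Proof.
move=> c_proper le_uN; symmetry.
apply: (sum_mon_widen (P := predT) (G := fun al => e al j * shmon c al u) le_uN).
by move=> al _ [i lt_u]; rewrite (shmon_eq0 c_proper lt_u) mulr0.
Qed.

End Composition.

Theorem theorem12 (R : realType) (m ell k : nat)
    (d d' : cseries R ell k) (c : ncseries R m ell) :
  proper_series c ->
  forall (w : word m) (j : 'I_k),
    wf_comp (cauchy d d') c w j = shuffle_vec (wf_comp d c) (wf_comp d' c) w j.
Proof.
move=> c_proper w j; set n := size w.
rewrite /shuffle_vec (eq_shuffle
  (a' := fun u => \sum_(a : {ffun 'I_ell -> 'I_n.+1}) d (mon_of a) j * shmon c (mon_of a) u)
  (b' := fun u => \sum_(b : {ffun 'I_ell -> 'I_n.+1}) d' (mon_of b) j * shmon c (mon_of b) u));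
  last 2 first.
  1,2: by move=> u; apply: wf_compE.
rewrite shuffle_suml (wf_compE _ _ c_proper (leqnn n)).
under eq_bigr do rewrite cauchy_mon_of mulr_suml.
rewrite (exchange_big_dep xpredT) //=; apply: eq_bigr => a _.
rewrite shuffle_sumr mulr_sumr.
rewrite (@sum_mon_shift _ _ _ a (fun be ga => d (mon_of a) j * d' be j * shmon c ga w)).
  by apply: eq_bigr => b _; rewrite shmonD mulrA.
by move=> be ga i lt_n; rewrite (shmon_eq0 c_proper lt_n) mulr0.
Qed.
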